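(* Let $U\subset \mathbb R^n$ and $V\subset \mathbb R^m$ be open and let $f:U\times V\to \mathbb R$ be upper-semicontinuous and bounded. For $\epsilon>0$ define $f^{\epsilon,p}(x,y)= \sup_{z\in U} \{ f(z,y) - \frac{1}{2\epsilon} \| z-x\|^2\}$ for $(x,y)\in U\times V$. Then: (i) if for each fixed $x$ the function $y\mapsto f(x,y)$ is convex, then $(x,y)\mapsto f^{\epsilon,p}(x,y) + \frac{1}{2\epsilon} \|x\|^2$ is convex; (ii) for $0<\epsilon'\le \epsilon$, $f \le f^{\epsilon',p} \le f^{\epsilon,p}$; (iii) with $\delta =2 (\epsilon \|f\|_{\infty})^{1/2}$, $f^{\epsilon,p}(x,y) = \sup_{\|\tau\|<\delta} \{ f(x+\tau,y) - \frac{1}{2\epsilon} \|\tau\|^2\}$ for $(x,y)\in U(\delta)\times V$; (iv) $\lim_{\epsilon\to 0^+} f^{\epsilon,p}(x,y) = f(x,y)$ for all $(x,y)\in U\times V$; (v) if $F$ is a constant-coefficient primitive subequation on $U$ with the Negativity Property and $f$ is $F\#\mathcal P$-subharmonic, then $f^{\epsilon,p}$ is $F\#\mathcal P$-subharmonic on $U(\delta)\times V$, with $\delta$ as in (iii).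
   Context: $U(\delta)=\{x\in\mathbb R^n: B_\delta(x)\subset U\}$ and $\|f\|_\infty=\sup|f|$. $J^2(U)=U\times\mathbb R\times\mathbb R^n\times\operatorname{Sym}^2_n$ ($\operatorname{Sym}^2_n$ = real symmetric $n\times n$ matrices), $J^2_n=\mathbb R\times\mathbb R^n\times\operatorname{Sym}^2_n$, and $F_x=\{(r,p,A):(x,r,p,A)\in F\}$. $F\subset J^2(U)$ is a primitive subequation if it is closed and $(r,p,A)\in F_x$, $P$ positive semidefinite imply $(r,p,A+P)\in F_x$; it is constant-coefficient if $F_x$ is independent of $x$; it has the Negativity Property if $(r,p,A)\in F_x$ and $r'\le r$ imply $(r',p,A)\in F_x$. For an upper-semicontinuous $h$ into $\mathbb R\cup\{-\infty\}$ on an open set $W\subset\mathbb R^k$ and $G\subset J^2(W)$: $(p,A)$ is an upper contact jet of $h$ at $w$ (with $h(w)\ne-\infty$) if $h(v)\le h(w)+p\cdot(v-w)+\frac12(v-w)^tA(v-w)$ for $v$ near $w$, and $h$ is $G$-subharmonic if $(h(w),p,A)\in G_w$ for all such jets. $\mathcal P\subset J^2(V)$ is $\{(y,r,p,D): D \text{ positive semidefinite}\}$. For $\Gamma\in\operatorname{Hom}(\mathbb R^n,\mathbb R^m)$ and $\alpha=(r,(p_1,p_2),\begin{pmatrix}B&C\\C^t&D\end{pmatrix})\in J^2_{n+m}$ set $i_\Gamma^*\alpha=(r,p_1+\Gamma^tp_2,B+C\Gamma+\Gamma^tC^t+\Gamma^tD\Gamma)$ and $j^*\alpha=(r,p_2,D)$;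 then $(F\#\mathcal P)_{(x,y)}=\{\alpha: i_\Gamma^*\alpha\in F_x\ \forall\Gamma,\ j^*\alpha\in\mathcal P_y\}$. *)

From HB Require Import structures.
From mathcomp Require Import all_boot all_order all_algebra.
From mathcomp Require Import all_classical all_reals all_analysis.
Set Implicit Arguments. Unset Strict Implicit. Unset Printing Implicit Defensive.
Import Order.TTheory GRing.Theory Num.Theory.
Import numFieldNormedType.Exports.
Local Open Scope classical_set_scope.
Local Open Scope ring_scope.

Section Defs.
Variable R : realType.

Definition dotp {k : nat} (u v : 'rV[R]_k) : R := (u *m v^T) 0 0.
Definition enorm {k : nat} (v : 'rV[R]_k) : R := Num.sqrt (dotp v v).
Definition quad {k : nat} (A : 'M[R]_k) (v : 'rV[R]_k) : R := (v *m A *m v^T) 0 0.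

Definition psd {k : nat} (P : 'M[R]_k) : Prop :=
  P^T = P /\ forall v : 'rV[R]_k, 0 <= quad P v.

Definition Udelta {k : nat} (U : set 'rV[R]_k) (delta : R) : set 'rV[R]_k :=
  [set x | forall z, enorm (z - x) <= delta -> U z].

Definition convex_on {k : nat} (S : set 'rV[R]_k) (g : 'rV[R]_k -> R) : Prop :=
  forall a b (t : R), 0 <= t <= 1 ->
    (forall s : R, 0 <= s <= 1 -> S ((1 - s) *: a + s *: b)) ->
    g ((1 - t) *: a + t *: b) <= (1 - t) * g a + t * g b.

Definition convex2_on {n m : nat} (U : set 'rV[R]_n) (V : set 'rV[R]_m)
  (g : 'rV[R]_n -> 'rV[R]_m -> R) : Prop :=
  forall a1 a2 b1 b2 (t : R), 0 <= t <= 1 ->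
    (forall s : R, 0 <= s <= 1 ->
       U ((1 - s) *: a1 + s *: a2) /\ V ((1 - s) *: b1 + s *: b2)) ->
    g ((1 - t) *: a1 + t *: a2) ((1 - t) *: b1 + t *: b2)
      <= (1 - t) * g a1 b1 + t * g a2 b2.

Definition usc_on {n m : nat} (W : 'rV[R]_n -> 'rV[R]_m -> Prop)
  (h : 'rV[R]_n -> 'rV[R]_m -> R) : Prop :=
  forall x y, W x y -> forall e : R, 0 < e -> exists2 d : R, 0 < d &
    forall x' y', W x' y' -> enorm (row_mx (x' - x) (y' - y)) < d ->
      h x' y' < h x y + e.

Definition supnorm {n m : nat} (U : set 'rV[R]_n) (V : set 'rV[R]_m)
  (f : 'rV[R]_n -> 'rV[R]_m -> R) : R :=
  sup [set r | exists x y, [/\ U x, V y & r = `|f x y|]].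

Definition fep {n m : nat} (U : set 'rV[R]_n) (f : 'rV[R]_n -> 'rV[R]_m -> R)
  (eps : R) (x : 'rV[R]_n) (y : 'rV[R]_m) : R :=
  sup [set f z y - (2 * eps)^-1 * enorm (z - x) ^+ 2 | z in U].

Definition delta_of {n m : nat} (U : set 'rV[R]_n) (V : set 'rV[R]_m)
  (f : 'rV[R]_n -> 'rV[R]_m -> R) (eps : R) : R :=
  2 * Num.sqrt (eps * supnorm U V f).

(* A constant-coefficient primitive subequation on U is U x F0 with
   F0 subset J^2_n = R x R^n x Sym^2_n closed and stable under adding psd
   matrices.  A jet (r,p,A) is a triple with A : 'M_n required symmetric. *)
Definition jet (k : nat) := (R * 'rV[R]_k * 'M[R]_k)%type.

Definition cc_primitive_subequation {n : nat} (F0 : set (jet n)) : Prop :=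
  [/\ closed F0,
      (forall r p A, F0 (r, p, A) -> A^T = A) &
      (forall r p A P, F0 (r, p, A) -> psd P -> F0 (r, p, A + P))].

Definition negativity_property {n : nat} (F0 : set (jet n)) : Prop :=
  forall r r' p A, F0 (r, p, A) -> r' <= r -> F0 (r', p, A).

(* A jet on
   R^(n+m) is (r, row_mx p1 p2, block_mx B C C^T D); Gamma : R^n -> R^m is
   the m x n matrix G, and with row vectors Gamma^t p2 is p2 *m G. *)
Definition FsharpP {n m : nat} (F0 : set (jet n)) (r : R)
  (p : 'rV[R]_(n + m)) (A : 'M[R]_(n + m)) : Prop :=
  (forall G : 'M[R]_(m, n),
     F0 (r, lsubmx p + rsubmx p *m G,
         ulsubmx A + ursubmx A *m G + G^T *m (ursubmx A)^T
           + G^T *m drsubmx A *m G))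
  /\ psd (drsubmx A).

Definition upper_contact_jet {n m : nat} (W : 'rV[R]_n -> 'rV[R]_m -> Prop)
  (h : 'rV[R]_n -> 'rV[R]_m -> R) (x : 'rV[R]_n) (y : 'rV[R]_m)
  (p : 'rV[R]_(n + m)) (A : 'M[R]_(n + m)) : Prop :=
  exists2 rho : R, 0 < rho &
    forall x' y', W x' y' -> enorm (row_mx (x' - x) (y' - y)) < rho ->
      h x' y' <= h x y + dotp p (row_mx (x' - x) (y' - y))
                 + 2^-1 * quad A (row_mx (x' - x) (y' - y)).

Definition subharmonic {n m : nat} (W : 'rV[R]_n -> 'rV[R]_m -> Prop)
  (G : R -> 'rV[R]_(n + m) -> 'M[R]_(n + m) -> Prop)
  (h : 'rV[R]_n -> 'rV[R]_m -> R) : Prop :=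
  usc_on W h /\
  forall x y, W x y -> forall p (A : 'M[R]_(n + m)), A^T = A ->
    upper_contact_jet W h x y p A -> G (h x y) p A.

End Defs.

From HB Require Import structures.
From mathcomp Require Import all_boot all_order all_algebra.
From mathcomp Require Import all_classical all_reals all_analysis.
From mathcomp Require Import ring lra.
Import Order.TTheory GRing.Theory Num.Theory.
Import numFieldNormedType.Exports.
Local Open Scope classical_set_scope.
Local Open Scope ring_scope.
Set Implicit Arguments. Unset Strict Implicit. Unset Printing Implicit Defensive.

(* For x in U(delta) every competitor z with |z - x| >= delta has penalty at
   least 2 ||f||, so its value is at most -||f|| <= f(x,y): only the closed
   delta-ball around x, a compact subset of U, matters.  This gives (iii), and
   together with upper semicontinuity and a uniform-radius compactness
   argument it shows that the supremum is attained and that f^{eps,p} is usc.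
   (i) holds because |z - x|^2 - |x|^2 = |z|^2 - 2<z,x> is affine in x, so
   f^{eps,p} + |x|^2/(2 eps) is a supremum of functions convex in (x,y).
   (iv) splits competitors into those near x, controlled by usc, and far ones,
   killed by the penalty as eps -> 0.  For (v), if the supremum at (x,y) is
   attained at z, then f^{eps,p}(x + z' - z, y') >= f(z',y') - |z - x|^2/(2 eps)
   with equality at (z',y') = (z,y), so every upper contact jet of f^{eps,p}
   at (x,y) is one of f at (z,y), whose value is larger by the penalty; the
   Negativity Property absorbs the difference. *)

Section Euclidean.
Variable R : realType.
Implicit Types (k l : nat) (r : R).

Lemma dotpE k (u v : 'rV[R]_k) : dotp u v = \sum_j u 0 j * v 0 j.
Proof. by rewrite /dotp !mxE; apply: eq_bigr => j _; rewrite mxE. Qed.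

Lemma dotpC k (u v : 'rV[R]_k) : dotp u v = dotp v u.
Proof. by rewrite !dotpE; apply: eq_bigr => j _; rewrite mulrC. Qed.

Lemma dotpDl k (u v w : 'rV[R]_k) : dotp (u + v) w = dotp u w + dotp v w.
Proof. by rewrite !dotpE -big_split; apply: eq_bigr => j _; rewrite mxE mulrDl. Qed.

Lemma dotpZl k a (u w : 'rV[R]_k) : dotp (a *: u) w = a * dotp u w.
Proof. by rewrite !dotpE mulr_sumr; apply: eq_bigr => j _; rewrite mxE mulrA. Qed.

Lemma dotpNl k (u w : 'rV[R]_k) : dotp (- u) w = - dotp u w.
Proof. by rewrite -scaleN1r dotpZl mulN1r. Qed.

Lemma dotpBl k (u v w : 'rV[R]_k) : dotp (u - v) w = dotp u w - dotp v w.
Proof. by rewrite dotpDl dotpNl. Qed.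

Lemma dotpDr k (u v w : 'rV[R]_k) : dotp w (u + v) = dotp w u + dotp w v.
Proof. by rewrite dotpC dotpDl !(dotpC w). Qed.

Lemma dotpZr k a (u w : 'rV[R]_k) : dotp w (a *: u) = a * dotp w u.
Proof. by rewrite dotpC dotpZl dotpC. Qed.

Lemma dotpNr k (u w : 'rV[R]_k) : dotp w (- u) = - dotp w u.
Proof. by rewrite dotpC dotpNl dotpC. Qed.

Lemma dotpBr k (u v w : 'rV[R]_k) : dotp w (u - v) = dotp w u - dotp w v.
Proof. by rewrite dotpDr dotpNr. Qed.

Lemma dotp0l k (w : 'rV[R]_k) : dotp 0 w = 0.
Proof. by rewrite -(scale0r 0) dotpZl mul0r. Qed.

Lemma dotp_row k l (a c : 'rV[R]_k) (b d : 'rV[R]_l) :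
  dotp (row_mx a b) (row_mx c d) = dotp a c + dotp b d.
Proof. by rewrite /dotp tr_row_mx mul_row_col mxE. Qed.

Lemma dotpp_ge0 k (u : 'rV[R]_k) : 0 <= dotp u u.
Proof. by rewrite dotpE sumr_ge0 // => j _; rewrite -expr2 sqr_ge0. Qed.

Lemma dotpp_eq0 k (u : 'rV[R]_k) : (dotp u u == 0) = (u == 0).
Proof.
apply/idP/eqP => [|->]; last by rewrite dotp0l.
rewrite dotpE psumr_eq0 => [/allP u0|j _]; last by rewrite -expr2 sqr_ge0.
apply/rowP => j; rewrite mxE; have /u0 := mem_index_enum j.
by rewrite implyTb mulf_eq0 orbb => /eqP.
Qed.

Lemma enorm_ge0 k (u : 'rV[R]_k) : 0 <= enorm u.
Proof. exact: sqrtr_ge0. Qed.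

Lemma enorm_sq k (u : 'rV[R]_k) : enorm u ^+ 2 = dotp u u.
Proof. by rewrite /enorm sqr_sqrtr // dotpp_ge0. Qed.

Lemma enorm_eq0 k (u : 'rV[R]_k) : (enorm u == 0) = (u == 0).
Proof. by rewrite -sqrf_eq0 enorm_sq dotpp_eq0. Qed.

Lemma enorm0 k : enorm (0 : 'rV[R]_k) = 0.
Proof. by apply/eqP; rewrite enorm_eq0. Qed.

Lemma enormN k (u : 'rV[R]_k) : enorm (- u) = enorm u.
Proof. by rewrite /enorm dotpNl dotpNr opprK. Qed.

Lemma enormB k (u v : 'rV[R]_k) : enorm (u - v) = enorm (v - u).
Proof. by rewrite -enormN opprB. Qed.

Lemma enorm_sqD k (u v : 'rV[R]_k) :
  enorm (u + v) ^+ 2 = enorm u ^+ 2 + 2 * dotp u v + enorm v ^+ 2.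
Proof. by rewrite !enorm_sq !(dotpDl, dotpDr) (dotpC v u); ring. Qed.

Lemma enorm_sqB k (u v : 'rV[R]_k) :
  enorm (u - v) ^+ 2 = enorm u ^+ 2 - 2 * dotp u v + enorm v ^+ 2.
Proof. by rewrite enorm_sqD enormN dotpNr; ring. Qed.

Lemma sqdist_sub_sq_affine k (z a b : 'rV[R]_k) t :
  enorm (z - ((1 - t) *: a + t *: b)) ^+ 2 - enorm ((1 - t) *: a + t *: b) ^+ 2 =
  (1 - t) * (enorm (z - a) ^+ 2 - enorm a ^+ 2) + t * (enorm (z - b) ^+ 2 - enorm b ^+ 2).
Proof. by rewrite !enorm_sqB dotpDr !dotpZr; ring. Qed.

Lemma dotp_le_enorm k (u v : 'rV[R]_k) : dotp u v <= enorm u * enorm v.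
Proof.
set a := enorm u; set b := enorm v.
have key : 0 <= a * b * (a * b - dotp u v).
  (* |b u - a v|^2 = 2 a b (a b - <u,v>) *)
  have := dotpp_ge0 (b *: u - a *: v).
  rewrite !(dotpBl, dotpBr, dotpZl, dotpZr) (dotpC v u) -!enorm_sq -/a -/b.
  by nra.
have [ab0|ab_neq0] := eqVneq (a * b) 0.
  rewrite ab0; move/eqP: ab0; rewrite mulf_eq0 !enorm_eq0 => /orP[]/eqP->.
    by rewrite dotp0l.
  by rewrite dotpC dotp0l.
have ab_gt0 : 0 < a * b by rewrite lt_def ab_neq0 mulr_ge0 ?enorm_ge0.
by rewrite -subr_ge0 -(pmulr_rge0 _ ab_gt0).
Qed.

Lemma normr_dotp_le k (u v : 'rV[R]_k) : `|dotp u v| <= enorm u * enorm v.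
Proof.
rewrite ler_norml dotp_le_enorm andbT lerNl -dotpNl -(enormN u).
exact: dotp_le_enorm.
Qed.

Lemma enormD_le k (u v : 'rV[R]_k) : enorm (u + v) <= enorm u + enorm v.
Proof.
rewrite -(ler_pXn2r (_ : 0 < 2)%N) ?nnegrE ?addr_ge0 ?enorm_ge0 //.
by rewrite enorm_sqD; have := dotp_le_enorm u v; nra.
Qed.

Lemma enorm_sqD_ge k (u v : 'rV[R]_k) :
  enorm u ^+ 2 - (2 * enorm u + enorm v) * enorm v <= enorm (u + v) ^+ 2.
Proof.
rewrite enorm_sqD; have := normr_dotp_le u v; rewrite ler_norml => /andP[? _].
by nra.
Qed.

Lemma scaled_enorm_sq_near_gt k c (x : 'rV[R]_k) (g : R) : 0 <= c -> 0 < g ->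
  exists2 eta, 0 < eta & forall h, enorm h < eta ->
    c * enorm x ^+ 2 - g < c * enorm (x + h) ^+ 2.
Proof.
move=> c0 g0; set K := c * (2 * enorm x + 1) + 1.
have K0 : 0 < K by have := enorm_ge0 x; rewrite /K; nra.
exists (Num.min 1 (g / K)) => [|h]; first by rewrite lt_min ltr01 divr_gt0.
rewrite lt_min ltr_pdivlMr // => /andP[h1 hK].
have b0 := enorm_ge0 h; have a0 := enorm_ge0 x.
have lb : c * (enorm x ^+ 2 - (2 * enorm x + enorm h) * enorm h)
          <= c * enorm (x + h) ^+ 2 by rewrite ler_wpM2l // enorm_sqD_ge.
have : c * ((2 * enorm x + enorm h) * enorm h) <= c * ((2 * enorm x + 1) * enorm h).
  by rewrite ler_wpM2l // ler_wpM2r // lerD2l ltW.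
by rewrite /K in hK; lra.
Qed.

Lemma enorm_row_sq k l (a : 'rV[R]_k) (b : 'rV[R]_l) :
  enorm (row_mx a b) ^+ 2 = enorm a ^+ 2 + enorm b ^+ 2.
Proof. by rewrite !enorm_sq dotp_row. Qed.

Lemma enorm_row_le k l (a : 'rV[R]_k) (b : 'rV[R]_l) : enorm a <= enorm (row_mx a b).
Proof.
rewrite -(ler_pXn2r (_ : 0 < 2)%N) ?nnegrE ?enorm_ge0 //.
by rewrite enorm_row_sq lerDl sqr_ge0.
Qed.

Lemma enorm_row0 k l (a : 'rV[R]_k) : enorm (row_mx a (0 : 'rV[R]_l)) = enorm a.
Proof.
by apply/eqP; rewrite -(eqrXn2 (_ : 0 < 2)%N) ?enorm_ge0 // enorm_row_sq enorm0 expr0n addr0.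
Qed.

Lemma mxnorm_le_enorm k (u : 'rV[R]_k) : `|u| <= enorm u.
Proof.
rewrite [leLHS]mx_normrE; apply/bigmax_leP; split=> [|[i j] _ /=]; first exact: enorm_ge0.
rewrite (ord1 i) -(ler_pXn2r (_ : 0 < 2)%N) ?nnegrE ?enorm_ge0 //.
rewrite enorm_sq dotpE (bigD1 j) //= real_normK ?num_real // expr2 lerDl.
by apply: sumr_ge0 => i' _; rewrite -expr2 sqr_ge0.
Qed.

Lemma enorm_le_mxnorm k (u : 'rV[R]_k) : enorm u <= k%:R * `|u|.
Proof.
rewrite -(ler_pXn2r (_ : 0 < 2)%N) ?nnegrE ?enorm_ge0 ?mulr_ge0 //.
have entry_le j : `|u 0 j| <= `|u|.
  by rewrite [leRHS]mx_normrE; apply/bigmax_geP; right; exists (0, j).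
have : enorm u ^+ 2 <= k%:R * `|u| ^+ 2.
  rewrite enorm_sq dotpE (le_trans _ (_ : \sum_(j < k) `|u| ^+ 2 <= _)) //.
    by rewrite ler_sum // => j _; rewrite -expr2 -real_normK ?num_real // ler_pXn2r ?nnegrE.
  by rewrite sumr_const card_ord mulr_natl.
have : k%:R <= k%:R ^+ 2 :> R
  by rewrite -natrX ler_nat; case: (k) => // k'; rewrite expnS expn1 leq_pmulr.
by nra.
Qed.

Lemma nbhs_enorm_lt k (z : 'rV[R]_k) r : 0 < r -> nbhs z [set z' | enorm (z' - z) < r].
Proof.
move=> r0; rewrite -nbhs_nbhs_norm; exists (r / k.+1%:R) => [|z' /= zz'].
  by rewrite /= divr_gt0.
rewrite distrC ltr_pdivlMr // mulrC in zz'.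
apply: le_lt_trans (enorm_le_mxnorm (z' - z)) (le_lt_trans _ zz').
by apply: ler_wpM2r; rewrite ?normr_ge0 ?ler_nat.
Qed.

Lemma closed_enorm_cball k (x : 'rV[R]_k) r : closed [set z | enorm (z - x) <= r].
Proof.
rewrite -openC openE => z /= /negP; rewrite -ltNge -subr_gt0 => gap.
apply: filterS (nbhs_enorm_lt z gap) => z' /= zz' z'x.
have := enormD_le (z - z') (z' - x); rewrite subrKA enormB.
by lra.
Qed.

Lemma compact_enorm_cball k (x : 'rV[R]_k) r : compact [set z | enorm (z - x) <= r].
Proof.
apply: bounded_closed_compact; last exact: closed_enorm_cball.
exists (`|x| + r); split; first by rewrite num_real.
move=> M xrM z /= zx; apply: le_trans (ltW xrM).
rewrite -[z](subrK x) addrC (le_trans (ler_normD _ _)) // lerD2l.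
exact: le_trans (mxnorm_le_enorm _) zx.
Qed.

End Euclidean.

Section UniformRadius.
Variables (R : realType) (k : nat).
Implicit Types (r : R) (x z : 'rV[R]_k).

Lemma compact_uniform_radius (K : set 'rV[R]_k) (P : R -> 'rV[R]_k -> Prop) :
  compact K ->
  (forall z, K z -> exists2 r, 0 < r &
     forall z' d, K z' -> enorm (z' - z) < r -> 0 < d < r -> P d z') ->
  exists2 d, 0 < d & forall z, K z -> P d z.
Proof.
move=> /compact_near_coveringP /(_ R 0^'+ (fun d z => K z -> P d z)) cover local.
case: cover.
- move=> z /local[r r0 Pr].
  exists ([set z' | enorm (z' - z) < r], [set d | 0 < d < r]).
    split; first exact: nbhs_enorm_lt.
    by near=> d; apply/andP; split; near: d; [exact: nbhs_right_gt|exact: nbhs_right_lt].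
  by move=> [z' d] /= [zz' d0r] Kz'; exact: Pr.
- move=> e /= e0 Pe; exists (e / 2) => [|z Kz]; first by rewrite divr_gt0.
  apply: Pe => //=; last by rewrite divr_gt0.
  by rewrite sub0r normrN gtr0_norm ?divr_gt0 // ltr_pdivrMr // ltr_pMr // ltr1n.
Unshelve. all: by end_near.
Qed.

Lemma Udelta_nbhs (U : set 'rV[R]_k) d x : open U -> Udelta U d x ->
  exists2 r, 0 < r & forall x', enorm (x' - x) < r -> Udelta U d x'.
Proof.
move=> oU Ux.
have [r r0 Ur] : exists2 r, 0 < r & forall z, enorm (z - x) <= d ->
    forall w, enorm (w - z) < r -> U w.
  apply: (compact_uniform_radius (P := fun r z => forall w, enorm (w - z) < r -> U w)).
    exact: compact_enorm_cball.
  move=> z /Ux Uz.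
  move: oU; rewrite openE => /(_ z Uz); rewrite /interior -nbhs_nbhs_norm.
  case=> rho rho0 Urho; exists (rho / 2) => [|z' e _ zz' /andP[_ er] w we].
    by rewrite divr_gt0.
  apply: Urho; rewrite /= distrC; apply: le_lt_trans (mxnorm_le_enorm _) _.
  have := enormD_le (w - z') (z' - z); rewrite subrKA.
  by lra.
exists r => // x' xx' z zx'; apply: (Ur (z - x' + x)); first by rewrite addrK.
by rewrite opprD opprB addrA [z + _]addrC subrK.
Qed.

End UniformRadius.

Section SupConvolution.
Variables (R : realType) (n m : nat) (U : set 'rV[R]_n) (V : set 'rV[R]_m).
Variables (f : 'rV[R]_n -> 'rV[R]_m -> R) (M : R).
Hypothesis f_bounded : forall x y, U x -> V y -> `|f x y| <= M.
Hypothesis f_usc : usc_on (fun x y => U x /\ V y) f.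
Implicit Types (eps : R) (x z : 'rV[R]_n) (y : 'rV[R]_m).

Local Notation penalty eps v := ((2 * eps)^-1 * enorm v ^+ 2).
Local Notation delta eps := (delta_of U V f eps).

Lemma inv2eps_ge0 eps : 0 < eps -> 0 <= (2 * eps)^-1.
Proof. by move=> e0; rewrite invr_ge0 mulr_ge0 // ltW. Qed.

Lemma penalty_ge0 eps k (v : 'rV[R]_k) : 0 < eps -> 0 <= penalty eps v.
Proof. by move=> e0; rewrite mulr_ge0 ?sqr_ge0 ?inv2eps_ge0. Qed.

Lemma f_le_bound x y : U x -> V y -> f x y <= M.
Proof. by move=> Ux Vy; exact: ler_normlW (f_bounded Ux Vy). Qed.

Lemma le_fep eps x y z : 0 < eps -> U z -> V y ->
  f z y - penalty eps (z - x) <= fep U f eps x y.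
Proof.
move=> e0 Uz Vy; apply: sup_upper_bound; last by exists z.
split; first by exists (f z y - penalty eps (z - x)), z.
exists M => _ [z' Uz' <-]; have := f_le_bound Uz' Vy; have := penalty_ge0 (z' - x) e0.
by lra.
Qed.

Lemma fep_le eps x y b : (exists z, U z) ->
  (forall z, U z -> f z y - penalty eps (z - x) <= b) -> fep U f eps x y <= b.
Proof.
move=> [z Uz] ub; apply: ge_sup => [|_ [z' Uz' <-]]; last exact: ub.
by exists (f z y - penalty eps (z - x)), z.
Qed.

Lemma f_le_fep eps x y : 0 < eps -> U x -> V y -> f x y <= fep U f eps x y.
Proof. by move=> e0 Ux Vy; have := le_fep x e0 Ux Vy; rewrite subrr enorm0 expr0n mulr0 subr0. Qed.

Lemma fep_le_eps eps eps' x y : 0 < eps' -> eps' <= eps -> U x -> V y ->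
  fep U f eps' x y <= fep U f eps x y.
Proof.
move=> e'0 e'e Ux Vy; have e0 := lt_le_trans e'0 e'e.
apply: fep_le => [|z Uz]; first by exists x.
apply: le_trans (le_fep x e0 Uz Vy); rewrite lerD2l lerN2 ler_wpM2r ?sqr_ge0 //.
by rewrite lef_pV2 ?posrE ?mulr_gt0 // ler_pM2l.
Qed.

Lemma normf_le_supnorm x y : U x -> V y -> `|f x y| <= supnorm U V f.
Proof.
move=> Ux Vy; apply: sup_upper_bound; last by exists x, y.
split; first by exists `|f x y|, x, y.
by exists M => _ [x' [y' [Ux' Vy' ->]]]; exact: f_bounded.
Qed.

Lemma Udelta_mem eps x : Udelta U (delta eps) x -> U x.
Proof. by apply; rewrite subrr enorm0 mulr_ge0 ?sqrtr_ge0. Qed.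

Lemma penalized_far_le eps x y z : 0 < eps -> U x -> V y -> U z ->
  delta eps <= enorm (z - x) -> f z y - penalty eps (z - x) <= - supnorm U V f.
Proof.
move=> e0 Ux Vy Uz far; set S := supnorm U V f.
have S0 : 0 <= S := le_trans (normr_ge0 _) (normf_le_supnorm Ux Vy).
have pen_ge : 2 * S <= penalty eps (z - x).
  have -> : 2 * S = (2 * eps)^-1 * (2 * Num.sqrt (eps * S)) ^+ 2.
    rewrite exprMn sqr_sqrtr; last by rewrite mulr_ge0 // ltW.
    by field; rewrite gt_eqF.
  apply: ler_wpM2l; first exact: inv2eps_ge0.
  by rewrite ler_pXn2r ?nnegrE ?enorm_ge0 ?mulr_ge0 ?sqrtr_ge0.
by have := normf_le_supnorm Uz Vy; rewrite -/S ler_norml => /andP[_ fzS]; lra.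
Qed.

Lemma fep_delta_ball eps x y : 0 < eps -> Udelta U (delta eps) x -> V y ->
  fep U f eps x y =
    sup [set f (x + t) y - penalty eps t | t in [set t | enorm t < delta eps]].
Proof.
move=> e0 Ux Vy; have Ux0 := Udelta_mem Ux; set T := [set _ | t in _].
have U_shift t : enorm t <= delta eps -> U (x + t).
  by move=> t_le; apply: Ux; rewrite addrC addKr.
have fx_ge := normf_le_supnorm Ux0 Vy; rewrite ler_norml in fx_ge.
have [d0|d_neq0] := eqVneq (delta eps) 0.
  have -> : T = set0.
    by apply/seteqP; split => // r [t /=]; rewrite d0 ltNge enorm_ge0.
  rewrite sup0; apply/le_anti/andP; split.
    apply: fep_le => [|z Uz]; first by exists x.
    by have := penalized_far_le e0 Ux0 Vy Uz; rewrite d0 enorm_ge0 => /(_ isT); lra.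
  have : supnorm U V f <= 0.
    by move: d0 => /eqP; rewrite mulf_eq0 pnatr_eq0 sqrtr_eq0 pmulr_rle0.
  by have := f_le_fep e0 Ux0 Vy; lra.
have d_gt0 : 0 < delta eps by rewrite lt_def d_neq0 mulr_ge0 ?sqrtr_ge0.
have Tfx : T (f x y) by exists 0; rewrite /= ?enorm0 // addr0 expr0n mulr0 subr0.
have supT : has_sup T.
  split; first by exists (f x y).
  exists M => _ [t /= t_lt <-]; have := f_le_bound (U_shift _ (ltW t_lt)) Vy.
  by have := penalty_ge0 t e0; lra.
apply/le_anti/andP; split.
  apply: fep_le => [|z Uz]; first by exists x.
  have [near|far] := ltP (enorm (z - x)) (delta eps).
    by apply: sup_upper_bound => //; exists (z - x); rewrite // [x + _]addrC subrK.
  apply: le_trans (sup_upper_bound supT Tfx).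
  by have := penalized_far_le e0 Ux0 Vy Uz far; lra.
apply: ge_sup => [|_ [t /= t_lt <-]]; first by exists (f x y).
by have := le_fep x e0 (U_shift _ (ltW t_lt)) Vy; rewrite [x + t - x]addrC addKr.
Qed.

Lemma fep_le_local_ub eps x y e d : 0 < eps -> U x -> V y -> 0 < d ->
  (forall z, U z -> enorm (z - x) < d -> f z y < f x y + e) ->
  eps * (4 * M + 1) < d ^+ 2 -> fep U f eps x y <= f x y + e.
Proof.
move=> e0 Ux Vy d0 near_ub eps_small.
have fx_ge : - M <= f x y by have := f_bounded Ux Vy; rewrite ler_norml => /andP[].
have e_ge0 : 0 <= e by have := near_ub x Ux; rewrite subrr enorm0 => /(_ d0); lra.
apply: fep_le => [|z Uz]; first by exists x.
have := penalty_ge0 (z - x) e0; have [near|far] := ltP (enorm (z - x)) d.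
  by have := near_ub z Uz near; lra.
have pen_ge : 2 * M <= penalty eps (z - x).
  have -> : 2 * M = (2 * eps)^-1 * (4 * M * eps) by field; rewrite gt_eqF.
  apply: ler_wpM2l; first exact: inv2eps_ge0.
  by have := enorm_ge0 (z - x); nra.
by have := f_le_bound Uz Vy; lra.
Qed.

Lemma fep_cvg x y : U x -> V y -> (fun eps => fep U f eps x y) @ 0^'+ --> f x y.
Proof.
move=> Ux Vy; apply/cvgrPdist_lt => e e0.
have [d d0 usc_xy] := f_usc (conj Ux Vy) (divr_gt0 e0 (ltr0Sn _ 1)).
have M0 : 0 <= M := le_trans (normr_ge0 _) (f_bounded Ux Vy).
have eps_max0 : 0 < d ^+ 2 / (4 * M + 1) by rewrite divr_gt0 ?exprn_gt0 //; lra.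
near=> eps.
have eps0 : 0 < eps by near: eps; exact: nbhs_right_gt.
have eps_small : eps < d ^+ 2 / (4 * M + 1) by near: eps; exact: nbhs_right_lt.
have fep_ub : fep U f eps x y <= f x y + e / 2.
  apply: (fep_le_local_ub eps0 Ux Vy d0) => [z Uz zx|].
    by apply: usc_xy; rewrite ?subrr ?enorm_row0.
  by rewrite -ltr_pdivlMr //; lra.
rewrite distrC ger0_norm ?subr_ge0 ?f_le_fep //.
by lra.
Unshelve. all: by end_near.
Qed.

Lemma convex2_fep_add_penalty eps : 0 < eps -> (forall x, U x -> convex_on V (f x)) ->
  convex2_on U V (fun x y => fep U f eps x y + penalty eps x).
Proof.
move=> e0 f_cvx a1 a2 b1 b2 t t01 seg /=; have /andP[t0 t1] := t01.
have [Ua1 Vb1] := seg 0 (introT andP (conj (lexx 0) ler01)).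
rewrite !(subr0, scale1r, scale0r, addr0) in Ua1 Vb1.
have [Ua2 Vb2] := seg 1 (introT andP (conj ler01 (lexx 1))).
rewrite !(subrr, scale1r, scale0r, add0r) in Ua2 Vb2.
have [Uat Vbt] := seg t t01.
set at_ := (1 - t) *: a1 + t *: a2; set bt := (1 - t) *: b1 + t *: b2.
suff : fep U f eps at_ bt <= (1 - t) * (fep U f eps a1 b1 + penalty eps a1)
         + t * (fep U f eps a2 b2 + penalty eps a2) - penalty eps at_ by lra.
apply: fep_le => [|z Uz]; first by exists at_.
have f_cvx_z := f_cvx z Uz b1 b2 t t01 (fun s s01 => (seg s s01).2).
have t'0 : 0 <= 1 - t by rewrite subr_ge0.
have fep_a1 := ler_wpM2l t'0 (le_fep a1 e0 Uz Vb1).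
have fep_a2 := ler_wpM2l t0 (le_fep a2 e0 Uz Vb2).
have := congr1 ( *%R (2 * eps)^-1) (sqdist_sub_sq_affine z a1 a2 t).
by rewrite -/at_ /=; lra.
Qed.

Lemma penalized_usc eps x y w0 e : 0 < eps -> U w0 -> V y -> 0 < e ->
  exists2 r, 0 < r & forall w h y', U (w + h) -> V y' ->
    enorm (w - w0) < r -> enorm (row_mx h (y' - y)) < r ->
    f (w + h) y' - penalty eps (w - x) < f w0 y - penalty eps (w0 - x) + e.
Proof.
move=> e0 Uw0 Vy e_gt0; have e2 : 0 < e / 2 by rewrite divr_gt0.
have [d d0 f_near] := f_usc (conj Uw0 Vy) e2.
have [eta eta0 pen_near] := scaled_enorm_sq_near_gt (w0 - x) (inv2eps_ge0 e0) e2.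
exists (Num.min (d / 2) eta) => [|w h y' Uwh Vy'].
  by rewrite lt_min eta0 divr_gt0.
rewrite !lt_min => /andP[ww0_d ww0_eta] /andP[hy_d _].
have whd : enorm (row_mx (w + h - w0) (y' - y)) < d.
  rewrite addrAC -[y' - y]add0r -add_row_mx.
  apply: le_lt_trans (enormD_le _ _) _; rewrite enorm_row0.
  by lra.
have := f_near _ _ (conj Uwh Vy') whd.
by have := pen_near _ ww0_eta; rewrite [w0 - x + _]addrC subrKA; lra.
Qed.

Lemma fep_attained eps x y : 0 < eps -> Udelta U (delta eps) x -> V y ->
  exists2 z, U z & fep U f eps x y = f z y - penalty eps (z - x).
Proof.
move=> e0 Ux Vy; have Ux0 := Udelta_mem Ux; set s := fep U f eps x y.
pose B := [set z | enorm (z - x) <= delta eps].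
have [[z Bz s_le]|no_max] := pselect (exists2 z, B z & s <= f z y - penalty eps (z - x)).
  by exists z; [exact: Ux | apply/le_anti; rewrite s_le le_fep //; exact: Ux].
(* Otherwise compactness of B turns the pointwise gaps into a uniform one. *)
have lt_s z : B z -> f z y - penalty eps (z - x) < s.
  by move=> Bz; rewrite ltNge; apply/negP => s_le; apply: no_max; exists z.
have [r r0 gap] : exists2 r, 0 < r &
    forall z, B z -> f z y - penalty eps (z - x) < s - r.
  apply: compact_uniform_radius; first exact: compact_enorm_cball.
  move=> z0 Bz0; set g := s - (f z0 y - penalty eps (z0 - x)).
  have g0 : 0 < g by rewrite subr_gt0 lt_s.
  have [r r0 near] := penalized_usc x e0 (Ux _ Bz0) Vy (divr_gt0 g0 (ltr0Sn _ 1)).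
  exists (Num.min r (g / 2)) => [|z d Bz]; first by rewrite lt_min r0 divr_gt0.
  rewrite !lt_min => /andP[zz0 _] /andP[_ /andP[_ dg]].
  have := near z 0 y; rewrite addr0 subrr enorm_row0 enorm0 => /(_ (Ux _ Bz) Vy zz0 r0).
  by rewrite /g in dg *; lra.
have : s <= s - r.
  apply: fep_le => [|z Uz]; first by exists x.
  have [Bz|far] := leP (enorm (z - x)) (delta eps); first exact/ltW/gap.
  have := penalized_far_le e0 Ux0 Vy Uz (ltW far).
  have Bx : B x by rewrite /B /= subrr enorm0 mulr_ge0 ?sqrtr_ge0.
  have := gap x Bx; rewrite subrr enorm0 expr0n mulr0 subr0.
  by have := normf_le_supnorm Ux0 Vy; rewrite ler_norml => /andP[? _]; lra.
by lra.
Qed.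

Lemma fep_usc eps : 0 < eps ->
  usc_on (fun x y => Udelta U (delta eps) x /\ V y) (fep U f eps).
Proof.
move=> e0 x y [Ux Vy] e e_gt0; have Ux0 := Udelta_mem Ux; set s := fep U f eps x y.
have e2 : 0 < e / 2 by rewrite divr_gt0.
have [r r0 unif] : exists2 r, 0 < r & forall w, enorm (w - x) <= delta eps ->
    forall x' y', U (w + (x' - x)) -> V y' -> enorm (row_mx (x' - x) (y' - y)) < r ->
      f (w + (x' - x)) y' - penalty eps (w - x) < s + e / 2.
  apply: compact_uniform_radius; first exact: compact_enorm_cball.
  move=> w0 Bw0; have [r r0 near] := penalized_usc x e0 (Ux _ Bw0) Vy e2.
  exists r => // w d _ ww0 /andP[_ dr] x' y' Uw Vy' xy'.
  have := near w _ y' Uw Vy' ww0 (lt_trans xy' dr).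
  by have := le_fep x e0 (Ux _ Bw0) Vy; rewrite -/s; lra.
exists r => // x' y' [Ux' Vy'] xy'; have Ux'0 := Udelta_mem Ux'.
suff : fep U f eps x' y' <= s + e / 2 by lra.
apply: fep_le => [|z Uz]; first by exists x'.
have [near|far] := leP (enorm (z - x')) (delta eps).
  have w_eq : z - x' + x + (x' - x) = z by rewrite -addrA subrKC subrK.
  have := unif (z - x' + x) _ x' y' _ Vy' xy'; rewrite addrK w_eq => /(_ near Uz).
  exact: ltW.
have := penalized_far_le e0 Ux'0 Vy' Uz (ltW far); have := f_le_fep e0 Ux0 Vy.
by have := normf_le_supnorm Ux0 Vy; rewrite -/s ler_norml => /andP[? _]; lra.
Qed.

Lemma upper_contact_jet_at_max eps x y z p (A : 'M[R]_(n + m)) :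
  0 < eps -> open U -> Udelta U (delta eps) x ->
  fep U f eps x y = f z y - penalty eps (z - x) ->
  upper_contact_jet (fun x y => Udelta U (delta eps) x /\ V y) (fep U f eps) x y p A ->
  upper_contact_jet (fun x y => U x /\ V y) f z y p A.
Proof.
move=> e0 oU Ux fz [rho rho0 jet]; have [r r0 Ux_near] := Udelta_nbhs oU Ux.
exists (Num.min rho r) => [|z' y' [Uz' Vy']]; first by rewrite lt_min rho0 r0.
rewrite lt_min => /andP[zy_rho zy_r]; set x' := x + (z' - z).
have x'x : x' - x = z' - z by rewrite /x' [x + _]addrC addrK.
have Ux' : Udelta U (delta eps) x'.
  by apply: Ux_near; rewrite x'x; exact: le_lt_trans (enorm_row_le _ _) zy_r.
have := jet _ y' (conj Ux' Vy'); rewrite x'x => /(_ zy_rho).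
have z'x' : z' - x' = z - x by apply/eqP; rewrite subr_eq subrKA subrKC.
by have := le_fep x' e0 Uz' Vy'; rewrite z'x' fz; lra.
Qed.

Lemma fep_subharmonic eps (F0 : set (jet R n)) :
  0 < eps -> open U -> negativity_property F0 ->
  subharmonic (fun x y => U x /\ V y) (FsharpP (m := m) F0) f ->
  subharmonic (fun x y => Udelta U (delta eps) x /\ V y) (FsharpP (m := m) F0) (fep U f eps).
Proof.
move=> e0 oU neg [_ f_jets]; split; first exact: fep_usc.
move=> x y [Ux Vy] p A At jet; have [z Uz fz] := fep_attained e0 Ux Vy.
have [F_jet D_psd] := f_jets z y (conj Uz Vy) p A At (upper_contact_jet_at_max e0 oU Ux fz jet).
split=> // G; apply: neg (F_jet G) _.
by rewrite fz gerDl oppr_le0 penalty_ge0.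
Qed.

End SupConvolution.

Unset Implicit Arguments.

Theorem lemma4p2 (R : realType) (n m : nat)
  (U : set 'rV[R]_n) (V : set 'rV[R]_m) (f : 'rV[R]_n -> 'rV[R]_m -> R) :
  open U -> open V ->
  usc_on (fun x y => U x /\ V y) f ->
  (exists M : R, forall x y, U x -> V y -> `|f x y| <= M) ->
  [/\
   (* (i) *)
   (forall eps : R, 0 < eps ->
      (forall x, U x -> convex_on V (f x)) ->
      convex2_on U V (fun x y => fep U f eps x y + (2 * eps)^-1 * enorm x ^+ 2)),
   (* (ii) *)
   (forall eps eps' : R, 0 < eps' -> eps' <= eps ->
      forall x y, U x -> V y ->
        f x y <= fep U f eps' x y /\ fep U f eps' x y <= fep U f eps x y),
   (* (iii) *)
   (forall eps : R, 0 < eps ->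
      forall x y, Udelta U (delta_of U V f eps) x -> V y ->
        fep U f eps x y =
          sup [set f (x + t) y - (2 * eps)^-1 * enorm t ^+ 2
              | t in [set t : 'rV[R]_n | enorm t < delta_of U V f eps]]),
   (* (iv) *)
   (forall x y, U x -> V y ->
      (fun eps : R => fep U f eps x y) @ 0^'+ --> f x y) &
   (* (v) *)
   (forall eps : R, 0 < eps ->
      forall F0 : set (jet R n),
        cc_primitive_subequation F0 -> negativity_property F0 ->
        subharmonic (fun x y => U x /\ V y) (FsharpP (m := m) F0) f ->
        subharmonic (fun x y => Udelta U (delta_of U V f eps) x /\ V y)
                    (FsharpP (m := m) F0) (fep U f eps))].
Proof.
move=> oU _ f_usc [M f_bounded]; split.
- by move=> eps e0; apply: (convex2_fep_add_penalty f_bounded e0).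
- move=> eps eps' e'0 e'e x y Ux Vy; split.
    exact: (f_le_fep f_bounded e'0 Ux Vy).
  exact: (fep_le_eps f_bounded e'0 e'e Ux Vy).
- by move=> eps e0 x y; apply: (fep_delta_ball f_bounded e0).
- by move=> x y; apply: (fep_cvg f_bounded f_usc).
- by move=> eps e0 F0 _; apply: (fep_subharmonic f_bounded f_usc e0 oU).
Qed.
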